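(* Let $\mu$ be a monotone system over $\{0,1\}^V$ and $\theta\in(0,1)$. Then the chain $P_{\mathrm{s\text{-}GD}}$ on $\Omega(\pi)$ is stochastically monotone.
   Context: Monotone system: for every $v$ and all feasible $\sigma\preceq\tau$ in $\{0,1\}^{V\setminus\{v\}}$ (coordinatewise), $\mu^\sigma_v(1)\le\mu^\tau_v(1)$. Tilted $(\theta*\mu)(\sigma)\propto\mu(\sigma)\theta^{\|\sigma\|_1}$. $\mathsf{lift}:\{0,1\}^V\to\{0,1,\star\}^V$ random: independently per coordinate $0\mapsto0$, $1\mapsto\star$ w.p. $1-\theta$, $1\mapsto1$ w.p. $\theta$; $\mathsf{contr}$: $0\mapsto0$, $1,\star\mapsto1$. $\pi$: law of $\mathsf{lift}(X)$, $X\sim\mu$, support $\Omega(\pi)$. $P_{\mathrm{s\text{-}GD}}$: from $X\in\Omega(\pi)$, pick $v$ uniformly; if $X_v=\star$ keep it; otherwise resample $X_v\in\{0,1\}$ from $(\theta*\mu)_v^{\sigma_{V\setminus\{v\}}}$ where $\sigma=\mathsf{contr}(X)$. Order $0<1<\star$, coordinatewise partial order. $P$ is stochastically monotone if $Pf$ is increasing for every increasing $f:\Omega(\pi)\to\mathbb R_{\ge0}$. *)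

From mathcomp Require Import all_boot all_order all_algebra.
Set Implicit Arguments. Unset Strict Implicit. Unset Printing Implicit Defensive.
Import Order.TTheory GRing.Theory Num.Theory.
Local Open Scope ring_scope.

Section Defs.
Variables (R : realFieldType) (V : finType).

Definition bconf := {ffun V -> bool}.
(* Lifted configurations in {0,1,star}^V, encoded by 'I_3 :
   0 = 0, 1 = 1, 2 = star.  The nat order on 'I_3 is the order 0 < 1 < star. *)
Definition lconf := {ffun V -> 'I_3}.

Definition is0 (a : 'I_3) : bool := (a == 0 :> nat).
Definition is1 (a : 'I_3) : bool := (a == 1 :> nat).
Definition isstar (a : 'I_3) : bool := (a == 2 :> nat).

Definition lle (X Y : lconf) : Prop := forall v, (X v <= Y v)%N.

Definition setb (s : bconf) (v : V) (b : bool) : bconf :=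
  [ffun u => if u == v then b else s u].
Definition setl (X : lconf) (v : V) (a : 'I_3) : lconf :=
  [ffun u => if u == v then a else X u].

Definition feasible (mu : bconf -> R) (v : V) (s : bconf) : Prop :=
  0 < mu (setb s v false) + mu (setb s v true).

Definition cond1 (mu : bconf -> R) (v : V) (s : bconf) : R :=
  mu (setb s v true) / (mu (setb s v false) + mu (setb s v true)).

Definition distribution (mu : bconf -> R) : Prop :=
  (forall s, 0 <= mu s) /\ \sum_(s : bconf) mu s = 1.

Definition monotone_system (mu : bconf -> R) : Prop :=
  forall (v : V) (s t : bconf),
    (forall u, u != v -> (s u <= t u)%O) ->
    feasible mu v s -> feasible mu v t ->
    cond1 mu v s <= cond1 mu v t.

Definition ones (s : bconf) : nat := #|[set u | s u]|.

Definition tilt (theta : R) (mu : bconf -> R) (s : bconf) : R :=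
  mu s * theta ^+ ones s / \sum_(t : bconf) mu t * theta ^+ ones t.

Definition contr (X : lconf) : bconf := [ffun v => ~~ is0 (X v)].

(* probability that lift(s) = X *)
Definition lift_prob (theta : R) (s : bconf) (X : lconf) : R :=
  \prod_(v : V)
    (if s v then (if is1 (X v) then theta else if isstar (X v) then 1 - theta else 0)
     else (if is0 (X v) then 1 else 0)).

Definition pi_law (theta : R) (mu : bconf -> R) (X : lconf) : R :=
  \sum_(s : bconf) mu s * lift_prob theta s X.

Definition Omega (theta : R) (mu : bconf -> R) (X : lconf) : bool :=
  0 < pi_law theta mu X.

Definition sgd_step (theta : R) (mu : bconf -> R) (v : V) (X Y : lconf) : R :=
  if isstar (X v) then (if Y == X then 1 else 0)
  else
    let p := cond1 (tilt theta mu) v (contr X) in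
    (if Y == setl X v 1 then p else 0) + (if Y == setl X v 0 then 1 - p else 0).

Definition P_sgd (theta : R) (mu : bconf -> R) (X Y : lconf) : R :=
  (#|V|%:R)^-1 * \sum_(v : V) sgd_step theta mu v X Y.

Definition Papply (theta : R) (mu : bconf -> R) (f : lconf -> R) (X : lconf) : R :=
  \sum_(Y : lconf | Omega theta mu Y) P_sgd theta mu X Y * f Y.

Definition increasing_on (theta : R) (mu : bconf -> R) (f : lconf -> R) : Prop :=
  forall X Y, Omega theta mu X -> Omega theta mu Y -> lle X Y -> f X <= f Y.

Definition stochastically_monotone (theta : R) (mu : bconf -> R) : Prop :=
  forall f : lconf -> R,
    (forall X, Omega theta mu X -> 0 <= f X) ->
    increasing_on theta mu f ->
    increasing_on theta mu (Papply theta mu f).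

End Defs.

(* The tilted measure [nu = theta * mu] multiplies the odds of [s_v = 1] by
   [theta] under every pinning, so it is again a monotone system, with the same
   support as [mu]; and a lifted configuration lies in Omega(pi) exactly when
   its contraction lies in that support.  One step of the chain leaves a [star]
   site frozen and otherwise performs a heat-bath update for [nu].  Coupling two
   ordered configurations through a single uniform variable, the larger one is
   set to [1] whenever the smaller one is (monotonicity of [nu]), and a frozen
   [star] dominates either outcome; averaging over the sites gives the claim. *)

From mathcomp Require Import all_boot all_order all_algebra.
From mathcomp Require Import ring lra.
Import Order.TTheory GRing.Theory Num.Theory.
Set Implicit Arguments. Unset Strict Implicit. Unset Printing Implicit Defensive.
Local Open Scope ring_scope.

Section Mixtures.
Variable R : realFieldType.

Lemma paddr_gt0 (x y : R) : 0 <= x -> 0 <= y -> (0 < x + y) = (0 < x) || (0 < y).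
Proof. by move=> x_ge0 y_ge0; rewrite !lt0r paddr_eq0 // negb_and addr_ge0 // x_ge0 y_ge0 !andbT. Qed.

Lemma mulr_ge0_cond (w z : R) : 0 <= w -> (0 < w -> 0 <= z) -> 0 <= w * z.
Proof.
move=> w_ge0 z_ge0; have [w_gt0|w_le0] := ltrP 0 w; first by rewrite mulr_ge0 ?z_ge0.
have -> : w = 0 by apply/le_anti; rewrite w_le0 w_ge0.
by rewrite mul0r.
Qed.

Lemma mixture_le (px py x0 x1 y0 y1 : R) :
  0 <= px -> px <= py -> py <= 1 ->
  (0 < px -> x1 <= y1) -> (px < py -> x0 <= y1) -> (py < 1 -> x0 <= y0) ->
  px * x1 + (1 - px) * x0 <= py * y1 + (1 - py) * y0.
Proof.
move=> px_ge0 pxy py_le1 le11 le01 le00; rewrite -subr_ge0.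
have -> : py * y1 + (1 - py) * y0 - (px * x1 + (1 - px) * x0) =
    px * (y1 - x1) + (py - px) * (y1 - x0) + (1 - py) * (y0 - x0) by ring.
rewrite !addr_ge0 //; apply: mulr_ge0_cond; rewrite ?subr_ge0 // ?subr_gt0 //.
Qed.

Lemma frac_le_cross (a0 a1 b0 b1 : R) : 0 < a0 + a1 -> 0 < b0 + b1 ->
  (a1 / (a0 + a1) <= b1 / (b0 + b1)) = (a1 * b0 <= b1 * a0).
Proof.
move=> a_gt0 b_gt0; rewrite ler_pdivrMr // mulrAC ler_pdivlMr //.
by rewrite !mulrDr [b1 * a1]mulrC lerD2r.
Qed.

End Mixtures.

Section Conditionals.
Variables (R : realFieldType) (V : finType) (w : bconf V -> R).
Hypothesis w_ge0 : forall s, 0 <= w s.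

Lemma setb_id (s : bconf V) v : setb s v (s v) = s.
Proof. by apply/ffunP => u; rewrite ffunE; case: eqP => // ->. Qed.

Lemma feasible_gt0 (s : bconf V) v : 0 < w s -> feasible w v s.
Proof.
rewrite /feasible paddr_gt0 // -{1}(setb_id s v).
by case: (s v) => ->; rewrite ?orbT.
Qed.

Lemma cond1_ge0 (s : bconf V) v : 0 <= cond1 w v s.
Proof. by rewrite divr_ge0 ?addr_ge0. Qed.

Lemma cond1_le1 (s : bconf V) v : feasible w v s -> cond1 w v s <= 1.
Proof. by move=> fs; rewrite ler_pdivrMr // mul1r lerDr. Qed.

Lemma cond1_gt0_weight (s : bconf V) v :
  0 < cond1 w v s -> 0 < w (setb s v true).
Proof.
move=> p_gt0; rewrite lt0r w_ge0 andbT; apply: contraTneq p_gt0 => w1.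
by rewrite /cond1 w1 mul0r ltxx.
Qed.

Lemma cond1_lt1_weight (s : bconf V) v : feasible w v s ->
  cond1 w v s < 1 -> 0 < w (setb s v false).
Proof.
move=> fs p_lt1; rewrite lt0r w_ge0 andbT; apply: contraTneq p_lt1 => w0.
have w1_gt0 : 0 < w (setb s v true) by move: fs; rewrite /feasible w0 add0r.
by rewrite /cond1 w0 add0r divff ?ltxx // gt_eqF.
Qed.

Lemma cond1_le_cross v (s t : bconf V) : feasible w v s -> feasible w v t ->
  (cond1 w v s <= cond1 w v t) =
  (w (setb s v true) * w (setb t v false) <= w (setb t v true) * w (setb s v false)).
Proof. exact: frac_le_cross. Qed.

End Conditionals.

Section Tilt.
Variables (R : realFieldType) (V : finType) (mu : bconf V -> R) (theta : R).
Hypothesis mu_ge0 : forall s, 0 <= mu s.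
Hypothesis theta_gt0 : 0 < theta.

Let Z := \sum_(t : bconf V) mu t * theta ^+ ones t.

Let weight_ge0 (t : bconf V) : 0 <= mu t * theta ^+ ones t.
Proof. by rewrite mulr_ge0 ?mu_ge0 ?exprn_ge0 ?ltW. Qed.

Let Z_ge0 : 0 <= Z.
Proof. exact: sumr_ge0. Qed.

Lemma ones_setb (s : bconf V) v (b : bool) :
  ones (setb s v b) = (b + ones (setb s v false))%N.
Proof.
case: b => //; rewrite /ones.
have -> : [set u | setb s v true u] = v |: [set u | setb s v false u].
  by apply/setP => u; rewrite !inE !ffunE; case: eqP.
by rewrite cardsU1 !inE ffunE eqxx.
Qed.

Lemma tilt_setb (s : bconf V) v (b : bool) :
  tilt theta mu (setb s v b) =
  theta ^+ b * mu (setb s v b) * (theta ^+ ones (setb s v false) / Z).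
Proof. by rewrite /tilt ones_setb exprD -/Z; ring. Qed.

Lemma tilt_ge0 (s : bconf V) : 0 <= tilt theta mu s.
Proof. exact: divr_ge0. Qed.

Lemma tilt_gt0 (s : bconf V) : (0 < tilt theta mu s) = (0 < mu s).
Proof.
have [mu_gt0|mu_le0] := ltrP 0 (mu s); last first.
  have mu0 : mu s = 0 by apply/le_anti; rewrite mu_le0 mu_ge0.
  by rewrite /tilt mu0 !mul0r ltxx.
have term_gt0 : 0 < mu s * theta ^+ ones s by rewrite mulr_gt0 ?exprn_gt0.
have Z_gt0 : 0 < Z.
  by rewrite /Z (bigD1 s) //=; apply: ltr_wpDr term_gt0; exact: sumr_ge0.
by rewrite /tilt -/Z divr_gt0.
Qed.

Lemma feasible_tilt (s : bconf V) v :
  feasible (tilt theta mu) v s <-> feasible mu v s.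
Proof. by rewrite /feasible !paddr_gt0 ?tilt_ge0 // !tilt_gt0. Qed.

Lemma tilt_monotone : monotone_system mu -> monotone_system (tilt theta mu).
Proof.
move=> mono v s t st fs ft.
have fs_mu : feasible mu v s by apply/feasible_tilt.
have ft_mu : feasible mu v t by apply/feasible_tilt.
have := mono v s t st fs_mu ft_mu; rewrite (@cond1_le_cross _ _ mu) // => mu_le.
rewrite (@cond1_le_cross _ _ (tilt theta mu)) // !tilt_setb /=.
set cs := _ / Z; set ct := _ / Z.
have cs_ge0 : 0 <= cs by rewrite /cs divr_ge0 // exprn_ge0 // ltW.
have ct_ge0 : 0 <= ct by rewrite /ct divr_ge0 // exprn_ge0 // ltW.
have c_ge0 : 0 <= theta * (cs * ct) by apply: mulr_ge0; [exact: ltW | exact: mulr_ge0].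
rewrite expr1 expr0 !mul1r; nra.
Qed.

End Tilt.

Section Lift.
Variables (R : realFieldType) (V : finType) (mu : bconf V -> R) (theta : R).
Hypothesis mu_ge0 : forall s, 0 <= mu s.
Hypotheses (theta_gt0 : 0 < theta) (theta_lt1 : theta < 1).

Lemma lift_prob_eq0 (s : bconf V) (X : lconf V) :
  s != contr X -> lift_prob theta s X = 0.
Proof.
move=> s_neq; have /existsP [v sv] : [exists v, s v != contr X v].
  by rewrite -negb_forall; apply: contra s_neq => /forallP eq_sX; apply/eqP/ffunP => u; apply/eqP.
rewrite /lift_prob (bigD1 v) //=; move: sv; rewrite ffunE.
by case: (s v); case: (X v) => [[|[|[|n]]] ?] //= _; rewrite mul0r.
Qed.

Lemma lift_prob_contr_gt0 (X : lconf V) : 0 < lift_prob theta (contr X) X.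
Proof.
apply: prodr_gt0 => v _; rewrite ffunE.
by case: (X v) => [[|[|[|n]]] ?] //=; rewrite subr_gt0.
Qed.

Lemma OmegaE (X : lconf V) : Omega theta mu X = (0 < mu (contr X)).
Proof.
rewrite /Omega /pi_law (bigD1 (contr X)) //= big1 ?addr0; last first.
  by move=> s /lift_prob_eq0 ->; rewrite mulr0.
by rewrite pmulr_lgt0 // lift_prob_contr_gt0.
Qed.

End Lift.

Section HeatBath.
Variables (R : realFieldType) (V : finType) (w : bconf V -> R).

Definition site_mean v (G : lconf V -> R) (X : lconf V) : R :=
  if isstar (X v) then G X
  else cond1 w v (contr X) * G (setl X v 1) + (1 - cond1 w v (contr X)) * G (setl X v 0).

Lemma contr_setl (X : lconf V) v (a : 'I_3) :
  contr (setl X v a) = setb (contr X) v (~~ is0 a).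
Proof. by apply/ffunP => u; rewrite !ffunE; case: eqP. Qed.

Lemma lle_setl (X Y : lconf V) v (a b : 'I_3) :
  lle X Y -> (a <= b)%N -> lle (setl X v a) (setl Y v b).
Proof. by move=> XY ab u; rewrite !ffunE; case: eqP. Qed.

Lemma lle_setl_star (X Y : lconf V) v (a : 'I_3) :
  lle X Y -> isstar (Y v) -> lle (setl X v a) Y.
Proof.
move=> XY /eqP Yv u; rewrite ffunE; case: eqP => [->|_]; last exact: XY.
by rewrite Yv -ltnS.
Qed.

Lemma isstar_le (X Y : lconf V) v : lle X Y -> isstar (X v) -> isstar (Y v).
Proof.
move=> XY; have := XY v; rewrite /isstar.
by case: (X v) => [[|[|[|n]]] ?]; case: (Y v) => [[|[|[|m]]] ?].
Qed.

Lemma contr_le (X Y : lconf V) u : lle X Y -> (contr X u <= contr Y u)%O.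
Proof.
move=> XY; have := XY u; rewrite !ffunE.
by case: (X u) => [[|[|[|n]]] ?]; case: (Y u) => [[|[|[|m]]] ?].
Qed.

Hypothesis w_ge0 : forall s, 0 <= w s.
Hypothesis w_mono : monotone_system w.

Lemma site_mean_mono v (G : lconf V -> R) (X Y : lconf V) :
  (forall X' Y', 0 < w (contr X') -> 0 < w (contr Y') -> lle X' Y' -> G X' <= G Y') ->
  0 < w (contr X) -> 0 < w (contr Y) -> lle X Y ->
  site_mean v G X <= site_mean v G Y.
Proof.
move=> G_mono wX wY XY.
have fX := feasible_gt0 w_ge0 v wX; have fY := feasible_gt0 w_ge0 v wY.
have supp1 Z : 0 < cond1 w v (contr Z) -> 0 < w (contr (setl Z v 1)).
  by rewrite contr_setl; apply: cond1_gt0_weight.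
have supp0 Z : feasible w v (contr Z) ->
    cond1 w v (contr Z) < 1 -> 0 < w (contr (setl Z v 0)).
  by rewrite contr_setl; apply: cond1_lt1_weight.
rewrite /site_mean; set pX := cond1 w v (contr X); set pY := cond1 w v (contr Y).
have pX_ge0 : 0 <= pX by apply: cond1_ge0.
have pX_le1 : pX <= 1 by apply: cond1_le1.
have pY_le1 : pY <= 1 by apply: cond1_le1.
have pXY : pX <= pY by apply: w_mono => // u _; apply: contr_le.
case X_star: (isstar (X v)); first by rewrite (isstar_le XY X_star); apply: G_mono.
case Y_star: (isstar (Y v)).
  have -> : G Y = 1 * G Y + (1 - 1) * G Y by rewrite subrr mul0r addr0 mul1r.
  apply: mixture_le; rewrite ?ltxx //.
  - by move=> pX_gt0; apply: G_mono (supp1 _ pX_gt0) wY (lle_setl_star _ XY Y_star).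
  - by move=> pX_lt1; apply: G_mono (supp0 _ fX pX_lt1) wY (lle_setl_star _ XY Y_star).
apply: mixture_le => // [pX_gt0 | pXY_lt | pY_lt1].
- by apply: G_mono (supp1 _ pX_gt0) (supp1 _ (lt_le_trans pX_gt0 pXY)) (lle_setl v XY _).
- apply: G_mono (supp0 _ fX (lt_le_trans pXY_lt pY_le1)) _ (lle_setl v XY _) => //.
  exact: supp1 _ (le_lt_trans pX_ge0 pXY_lt).
- by apply: G_mono (supp0 _ fX (le_lt_trans pXY pY_lt1)) (supp0 _ fY pY_lt1) (lle_setl v XY _).
Qed.

End HeatBath.

Section Kernel.
Variables (R : realFieldType) (V : finType) (mu : bconf V -> R) (theta : R).

Lemma sum_mul_if_eq (X : lconf V) (c : R) (G : lconf V -> R) :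
  \sum_(Y : lconf V) (if Y == X then c else 0) * G Y = c * G X.
Proof. by rewrite (bigD1 X) //= eqxx big1 ?addr0 // => Y /negbTE ->; rewrite mul0r. Qed.

Lemma sgd_step_mean v (G : lconf V -> R) (X : lconf V) :
  \sum_Y sgd_step theta mu v X Y * G Y = site_mean (tilt theta mu) v G X.
Proof.
rewrite /sgd_step /site_mean; case: (isstar (X v)); first by rewrite sum_mul_if_eq mul1r.
by under eq_bigr => Y _ do rewrite mulrDl; rewrite big_split /= !sum_mul_if_eq.
Qed.

Lemma Papply_site_means (f : lconf V -> R) (X : lconf V) :
  Papply theta mu f X = #|V|%:R^-1 *
    \sum_v site_mean (tilt theta mu) v (fun Y => if Omega theta mu Y then f Y else 0) X.
Proof.
set F := fun Y => if Omega theta mu Y then f Y else 0.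
have -> : \sum_v site_mean (tilt theta mu) v F X =
    \sum_v \sum_Y sgd_step theta mu v X Y * F Y.
  by apply: eq_bigr => v _; rewrite sgd_step_mean.
rewrite exchange_big mulr_sumr /Papply big_mkcond /=; apply: eq_bigr => Y _.
by rewrite /P_sgd /F -mulr_suml mulrA; case: ifP; rewrite ?mulr0.
Qed.

End Kernel.

Unset Implicit Arguments. Set Strict Implicit.

Theorem lemma5p3 (R : realFieldType) (V : finType) (mu : bconf V -> R) (theta : R) :
  distribution mu -> monotone_system mu -> 0 < theta -> theta < 1 ->
  stochastically_monotone theta mu.
Proof.
move=> [mu_ge0 _] mu_mono theta_gt0 theta_lt1 f _ f_incr X Y OX OY XY.
have OmegaE_tilt Z : Omega theta mu Z = (0 < tilt theta mu (contr Z)).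
  by rewrite OmegaE // tilt_gt0.
rewrite !Papply_site_means; apply: ler_wpM2l; first by rewrite invr_ge0 ler0n.
apply: ler_sum => v _; apply: site_mean_mono; rewrite -?OmegaE_tilt //.
- exact: tilt_ge0.
- exact: tilt_monotone.
- by move=> X' Y'; rewrite -!OmegaE_tilt => OX' OY' XY'; rewrite OX' OY'; apply: f_incr.
Qed.
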